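(* For every integer $n\ge 1$, the subdivision scheme $S_n$ is convergent.
   Context: For an integer $n\ge1$, the subdivision scheme $S_n$ acts on real sequences $\mathbf f^k=(f^k_i)_{i\in\mathbb Z}$ (the value $f^k_i$ being associated with the dyadic point $2^{-k}i$), starting from initial data $\mathbf f^0$, by the refinement rules $$f^{k+1}_{2i}=\frac1{2n-1}\sum_{j=-n+1}^{n-1}f^k_{i+j},\qquad f^{k+1}_{2i+1}=\frac1{2n}\sum_{j=-n+1}^{n}f^k_{i+j},\qquad i\in\mathbb Z,\ k\ge0.$$ A subdivision scheme is called convergent if for every bounded initial sequence $\mathbf f^0$ there is a continuous function $F:\mathbb R\to\mathbb R$ with $\lim_{k\to\infty}\sup_{i\in\mathbb Z}|f^k_i-F(2^{-k}i)|=0$, and $F$ is not identically zero for some initial data; $F$ is called the limit function generated from $\mathbf f^0$. *)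

From Stdlib Require Import Reals ZArith.
Open Scope R_scope.

Fixpoint rsum (g : nat -> R) (m : nat) : R :=
  match m with
  | O => 0
  | S m' => rsum g m' + g m'
  end.

(* For an index m, i := floor(m/2), so that
   m = 2i (m even) or m = 2i+1 (m odd).
   Even rule: (1/(2n-1)) * sum_{j=-n+1}^{n-1} f(i+j)   (2n-1 terms)
   Odd rule : (1/(2n))   * sum_{j=-n+1}^{n}   f(i+j)   (2n terms)      *)
Definition step (n : nat) (f : Z -> R) : Z -> R :=
  fun m =>
    let i := (m / 2)%Z in
    if Z.even m then
      / INR (2 * n - 1) *
        rsum (fun k => f (i - Z.of_nat n + 1 + Z.of_nat k)%Z) (2 * n - 1)
    else
      / INR (2 * n) *
        rsum (fun k => f (i - Z.of_nat n + 1 + Z.of_nat k)%Z) (2 * n).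

Definition iterate (n : nat) (k : nat) (f0 : Z -> R) : Z -> R :=
  Nat.iter k (step n) f0.

Definition bounded_seq (f : Z -> R) : Prop :=
  exists M : R, forall i : Z, Rabs (f i) <= M.

Definition is_limit_function (n : nat) (f0 : Z -> R) (F : R -> R) : Prop :=
  continuity F /\
  forall eps : R, eps > 0 ->
    exists K : nat, forall k : nat, (k >= K)%nat ->
      forall i : Z, Rabs (iterate n k f0 i - F (IZR i / 2 ^ k)) <= eps.

Definition convergent (n : nat) : Prop :=
  (forall f0 : Z -> R, bounded_seq f0 -> exists F : R -> R, is_limit_function n f0 F)
  /\
  (exists (f0 : Z -> R) (F : R -> R),
      bounded_seq f0 /\ is_limit_function n f0 F /\ exists x : R, F x <> 0).

(* If the increments of a sequence f are at most d, then every value of S_n f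
   lies within n d of its parent value f(floor(m/2)), and the increments of
   S_n f are at most d/2: consecutive even and odd masks are averages over
   windows that differ by one point.  Hence the increments of f^k are
   O(2^-k), the step functions x |-> f^k(floor(2^k x)) converge uniformly
   at a geometric rate to a Lipschitz function F, and at the dyadic point
   i/2^k the k-th step function takes the value f^k_i.  Constant data are
   reproduced, so the limit is not always zero. *)
From Stdlib Require Import Reals ZArith Lra Lia.
Open Scope R_scope.

Lemma rsum_ext g h N : (forall t, (t < N)%nat -> g t = h t) -> rsum g N = rsum h N.
Proof. induction N; intros H; simpl; auto. rewrite IHN, H; auto. Qed.

Lemma rsum_minus g h N : rsum (fun t => g t - h t) N = rsum g N - rsum h N.
Proof. induction N; simpl; [lra|]. rewrite IHN; lra. Qed.

Lemma rsum_const c N : rsum (fun _ => c) N = INR N * c.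
Proof. induction N; simpl rsum; [simpl; lra|]. rewrite IHN, S_INR; lra. Qed.

Lemma rsum_scal c g N : rsum (fun t => c * g t) N = c * rsum g N.
Proof. induction N; simpl; [lra|]. rewrite IHN; lra. Qed.

Lemma rsum_INR N : rsum INR N = INR N * (INR N - 1) / 2.
Proof. induction N; simpl rsum; [simpl; lra|]. rewrite IHN, S_INR; lra. Qed.

Lemma rsum_succ_l g N : rsum g (S N) = g O + rsum (fun t => g (S t)) N.
Proof. induction N; simpl rsum; [simpl; lra|]. simpl rsum in IHN. rewrite IHN; lra. Qed.

Lemma Rabs_rsum_le h c N :
  (forall t, (t < N)%nat -> Rabs (h t) <= c t) -> Rabs (rsum h N) <= rsum c N.
Proof.
  induction N; intros H; simpl.
  - rewrite Rabs_R0; lra.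
  - eapply Rle_trans; [apply Rabs_triang|].
    apply Rplus_le_compat; [apply IHN; intros; apply H; lia | apply H; lia].
Qed.

Lemma Rabs_mean_sub_le N g c B : (0 < N)%nat ->
  (forall t, (t < N)%nat -> Rabs (g t - c) <= B) ->
  Rabs (/ INR N * rsum g N - c) <= B.
Proof.
  intros HN H.
  assert (HN' : 0 < INR N) by (apply lt_0_INR; lia).
  replace (/ INR N * rsum g N - c) with (/ INR N * rsum (fun t => g t - c) N)
    by (rewrite rsum_minus, rsum_const; field; lra).
  rewrite Rabs_mult, Rabs_inv, Rabs_pos_eq by lra.
  apply Rle_trans with (/ INR N * rsum (fun _ => B) N).
  - apply Rmult_le_compat_l; [left; apply Rinv_0_lt_compat; lra | apply Rabs_rsum_le; auto].
  - rewrite rsum_const. right; field; lra.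
Qed.

Lemma mean_snoc_sub g N : (0 < N)%nat ->
  / INR (S N) * rsum g (S N) - / INR N * rsum g N
  = / (INR N * (INR N + 1)) * rsum (fun t => g N - g t) N.
Proof.
  intros HN. assert (0 < INR N) by (apply lt_0_INR; lia).
  simpl rsum. rewrite rsum_minus, rsum_const, S_INR. field. lra.
Qed.

Lemma mean_behead_sub g N : (0 < N)%nat ->
  / INR N * rsum (fun t => g (S t)) N - / INR (S N) * rsum g (S N)
  = / (INR N * (INR N + 1)) * rsum (fun t => g (S t) - g O) N.
Proof.
  intros HN. assert (0 < INR N) by (apply lt_0_INR; lia).
  rewrite rsum_succ_l, rsum_minus, rsum_const, S_INR. field. lra.
Qed.

Lemma Rabs_scaled_rsum_le N h d : (0 < N)%nat ->
  Rabs (rsum h N) <= d * (INR N * (INR N + 1) / 2) ->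
  Rabs (/ (INR N * (INR N + 1)) * rsum h N) <= d / 2.
Proof.
  intros HN H. assert (0 < INR N) by (apply lt_0_INR; lia).
  rewrite Rabs_mult, Rabs_inv, Rabs_pos_eq by nra.
  apply Rle_trans with (/ (INR N * (INR N + 1)) * (d * (INR N * (INR N + 1) / 2))).
  - apply Rmult_le_compat_l; auto. left; apply Rinv_0_lt_compat; nra.
  - right; field; lra.
Qed.

Definition increments_le (f : Z -> R) (d : R) : Prop :=
  forall i, Rabs (f (i + 1)%Z - f i) <= d.

Lemma increments_le_nonneg f d : increments_le f d -> 0 <= d.
Proof. intros H. specialize (H 0%Z). pose proof (Rabs_pos (f (0 + 1)%Z - f 0%Z)). lra. Qed.

Lemma increments_le_nat f d : increments_le f d ->
  forall a p, Rabs (f (a + Z.of_nat p)%Z - f a) <= d * INR p.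
Proof.
  intros H a p. induction p.
  - simpl. replace (a + 0)%Z with a by lia. rewrite Rminus_diag, Rabs_R0; lra.
  - rewrite S_INR.
    replace (f (a + Z.of_nat (S p))%Z - f a) with
      ((f ((a + Z.of_nat p) + 1)%Z - f (a + Z.of_nat p)%Z) + (f (a + Z.of_nat p)%Z - f a))
      by (replace (a + Z.of_nat (S p))%Z with ((a + Z.of_nat p) + 1)%Z by lia; ring).
    eapply Rle_trans; [apply Rabs_triang|]. specialize (H (a + Z.of_nat p)%Z). lra.
Qed.

Lemma increments_le_Z f d : increments_le f d ->
  forall a b, Rabs (f b - f a) <= d * Rabs (IZR (b - a)).
Proof.
  intros H.
  assert (Hle : forall a b, (a <= b)%Z -> Rabs (f b - f a) <= d * Rabs (IZR (b - a))).
  { intros a b Hab. replace b with (a + Z.of_nat (Z.to_nat (b - a)))%Z at 1 by lia.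
    rewrite (Rabs_pos_eq (IZR _)) by (apply IZR_le; lia).
    rewrite <- (Z2Nat.id (b - a)) at 2 by lia. rewrite <- INR_IZR_INZ.
    apply increments_le_nat; auto. }
  intros a b. destruct (Z.le_gt_cases a b) as [Hab|Hab]; auto.
  rewrite Rabs_minus_sym, <- (Rabs_Ropp (IZR (b - a))), <- opp_IZR.
  replace (- (b - a))%Z with (a - b)%Z by lia. apply Hle; lia.
Qed.

Lemma Z_div2_cases m : m = (2 * (m / 2))%Z \/ m = (2 * (m / 2) + 1)%Z.
Proof.
  pose proof (Z.div_mod m 2 ltac:(lia)). pose proof (Z.mod_pos_bound m 2 ltac:(lia)). lia.
Qed.

Section Step.

Variable n : nat.
Hypothesis Hn : (1 <= n)%nat.

Definition window (f : Z -> R) (i : Z) (k : nat) : R :=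
  f (i - Z.of_nat n + 1 + Z.of_nat k)%Z.

Lemma step_even f i :
  step n f (2 * i)%Z = / INR (2 * n - 1) * rsum (window f i) (2 * n - 1).
Proof.
  unfold step. rewrite Z.even_mul, Z.mul_comm, Z.div_mul by lia. reflexivity.
Qed.

Lemma step_odd f i :
  step n f (2 * i + 1)%Z = / INR (2 * n) * rsum (window f i) (2 * n).
Proof.
  unfold step. rewrite Z.even_add, Z.even_mul, Z.mul_comm, Z.div_add_l by lia.
  change (1 / 2)%Z with 0%Z. rewrite Z.add_0_r. reflexivity.
Qed.

Lemma window_sub_center f d i t : increments_le f d -> (t < 2 * n)%nat ->
  Rabs (window f i t - f i) <= d * INR n.
Proof.
  intros H Ht. pose proof (increments_le_nonneg f d H) as Hd. unfold window.
  destruct (Nat.le_gt_cases (n - 1) t).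
  - replace (i - Z.of_nat n + 1 + Z.of_nat t)%Z with (i + Z.of_nat (t - (n - 1)))%Z by lia.
    eapply Rle_trans; [apply (increments_le_nat f d H)|].
    apply Rmult_le_compat_l; auto. apply le_INR; lia.
  - rewrite Rabs_minus_sym.
    replace i with ((i - Z.of_nat n + 1 + Z.of_nat t) + Z.of_nat (n - 1 - t))%Z at 1 by lia.
    eapply Rle_trans; [apply (increments_le_nat f d H)|].
    apply Rmult_le_compat_l; auto. apply le_INR; lia.
Qed.

Lemma step_sub_parent f d m : increments_le f d ->
  Rabs (step n f m - f (m / 2)%Z) <= d * INR n.
Proof.
  intros H. set (i := (m / 2)%Z).
  destruct (Z_div2_cases m) as [Hm|Hm]; fold i in Hm; rewrite Hm.
  - rewrite step_even. apply Rabs_mean_sub_le; [lia|].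
    intros t Ht. apply window_sub_center; auto. lia.
  - rewrite step_odd. apply Rabs_mean_sub_le; [lia|].
    intros t Ht. apply window_sub_center; auto.
Qed.

Lemma step_increments f d : increments_le f d -> increments_le (step n f) (d / 2).
Proof.
  intros H m. pose proof (increments_le_nonneg f d H) as Hd.
  set (N := (2 * n - 1)%nat).
  assert (HN : (0 < N)%nat) by (unfold N; lia).
  assert (H2n : (2 * n)%nat = S N) by (unfold N; lia).
  set (i := (m / 2)%Z). set (g := window f i).
  destruct (Z_div2_cases m) as [Hm|Hm]; fold i in Hm; rewrite Hm.
  - rewrite step_odd, step_even. fold N g. rewrite H2n, mean_snoc_sub by auto.
    apply Rabs_scaled_rsum_le; auto.
    eapply Rle_trans; [apply (Rabs_rsum_le _ (fun t => d * (INR N - INR t)))|].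
    + intros t Ht. unfold g, window. rewrite <- minus_INR by lia.
      replace (i - Z.of_nat n + 1 + Z.of_nat N)%Z with
        ((i - Z.of_nat n + 1 + Z.of_nat t) + Z.of_nat (N - t))%Z by (unfold N; lia).
      apply (increments_le_nat f d H).
    + rewrite rsum_scal, rsum_minus, rsum_const, rsum_INR. right; field.
  - replace (2 * i + 1 + 1)%Z with (2 * (i + 1))%Z by lia.
    rewrite step_even, step_odd. fold N g. rewrite H2n.
    rewrite (rsum_ext (window f (i + 1)) (fun t => g (S t)))
      by (intros t _; unfold g, window; f_equal; lia).
    rewrite mean_behead_sub by auto.
    apply Rabs_scaled_rsum_le; auto.
    eapply Rle_trans; [apply (Rabs_rsum_le _ (fun t => d * (INR t + 1)))|].
    + intros t Ht. unfold g, window. rewrite <- S_INR.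
      replace (i - Z.of_nat n + 1 + Z.of_nat (S t))%Z with
        ((i - Z.of_nat n + 1 + Z.of_nat 0) + Z.of_nat (S t))%Z by lia.
      apply (increments_le_nat f d H).
    + rewrite rsum_scal.
      rewrite (rsum_ext _ (fun t => INR t - (-1))) by (intros; ring).
      rewrite rsum_minus, rsum_const, rsum_INR. right; field.
Qed.

Lemma step_const f c : (forall i, f i = c) -> forall m, step n f m = c.
Proof.
  intros H m. unfold step. destruct (Z.even m);
    rewrite (rsum_ext _ (fun _ => c)) by (intros; apply H); rewrite rsum_const;
    field; apply not_0_INR; lia.
Qed.

Lemma iterate_const c k i : iterate n k (fun _ => c) i = c.
Proof. revert i; induction k; intros i; simpl; auto. apply step_const; auto. Qed.

Lemma iterate_increments f0 M : (forall i, Rabs (f0 i) <= M) ->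
  forall k, increments_le (iterate n k f0) (2 * M / 2 ^ k).
Proof.
  intros HM k. induction k; intros i.
  - simpl. replace (2 * M / 1) with (M + M) by field.
    eapply Rle_trans; [apply Rabs_triang|]. rewrite Rabs_Ropp.
    pose proof (HM i); pose proof (HM (i + 1)%Z). lra.
  - eapply Rle_trans; [apply step_increments, IHk|].
    pose proof (pow_lt 2 k ltac:(lra)). simpl. right; field; lra.
Qed.

End Step.

Lemma eventually_div_pow2_lt (B eps : R) : 0 < eps ->
  exists K, forall k, (K <= k)%nat -> B / 2 ^ k < eps.
Proof.
  intros He. pose proof (Rabs_pos B). pose proof (Rle_abs B).
  assert (Hy : 0 < eps / (Rabs B + 1)) by (apply Rdiv_lt_0_compat; lra).
  destruct (pow_lt_1_zero (/ 2) ltac:(rewrite Rabs_pos_eq; lra) _ Hy) as [K HK].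
  exists K. intros k Hk. specialize (HK k Hk).
  assert (H2 : 0 < 2 ^ k) by (apply pow_lt; lra).
  rewrite pow_inv, Rabs_pos_eq in HK by (left; apply Rinv_0_lt_compat; lra).
  apply Rle_lt_trans with ((Rabs B + 1) * / 2 ^ k).
  - apply Rmult_le_compat_r; [left; apply Rinv_0_lt_compat|]; lra.
  - apply Rmult_lt_reg_l with (/ (Rabs B + 1)); [apply Rinv_0_lt_compat; lra|].
    rewrite <- Rmult_assoc, Rinv_l by lra. lra.
Qed.

Lemma Rle_of_le_plus_div_pow2 a b B : (forall k, a <= b + B / 2 ^ k) -> a <= b.
Proof.
  intros H. destruct (Rle_or_lt a b) as [|Hlt]; auto.
  destruct (eventually_div_pow2_lt B (a - b) ltac:(lra)) as [K HK].
  specialize (HK K (le_n K)). specialize (H K). lra.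
Qed.

Lemma Un_cv_dist_le (u : nat -> R) l a B k : Un_cv u l ->
  (forall j, (k <= j)%nat -> Rabs (u j - a) <= B) -> Rabs (l - a) <= B.
Proof.
  intros Hu H. destruct (Rle_or_lt (Rabs (l - a)) B) as [|Hlt]; auto.
  destruct (Hu (Rabs (l - a) - B) ltac:(lra)) as [N HN].
  specialize (HN (max N k) ltac:(lia)). specialize (H (max N k) ltac:(lia)).
  unfold R_dist in HN. rewrite Rabs_minus_sym in HN.
  pose proof (Rabs_triang (l - u (max N k)) (u (max N k) - a)).
  replace (l - u (max N k) + (u (max N k) - a)) with (l - a) in * by ring. lra.
Qed.

Section GeometricLimit.

Variables (e : nat -> R -> R) (C : R).
Hypothesis He : forall k x, Rabs (e (S k) x - e k x) <= C / 2 ^ S k.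

Lemma geometric_tail_le k j x : (k <= j)%nat -> Rabs (e j x - e k x) <= C / 2 ^ k.
Proof.
  assert (HC : 0 <= C).
  { pose proof (Rabs_pos (e 1%nat x - e O x)). specialize (He O x). simpl in He.
    lra. }
  intros Hj. replace j with (k + (j - k))%nat by lia.
  enough (Hp : forall p, Rabs (e (k + p)%nat x - e k x) <= C / 2 ^ k - C / 2 ^ (k + p)).
  { specialize (Hp (j - k)%nat). pose proof (pow_lt 2 (k + (j - k)) ltac:(lra)).
    assert (0 <= C / 2 ^ (k + (j - k))) by (unfold Rdiv; apply Rmult_le_pos; [|left; apply Rinv_0_lt_compat]; lra). lra. }
  induction p.
  - rewrite Nat.add_0_r, !Rminus_diag, Rabs_R0. lra.
  - rewrite Nat.add_succ_r.
    replace (e (S (k + p)) x - e k x)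
      with ((e (S (k + p)) x - e (k + p)%nat x) + (e (k + p)%nat x - e k x)) by ring.
    eapply Rle_trans; [apply Rabs_triang|].
    pose proof (He (k + p)%nat x). pose proof (pow_lt 2 (k + p) ltac:(lra)).
    replace (C / 2 ^ (k + p)) with (C / 2 ^ S (k + p) + C / 2 ^ S (k + p))
      in IHp by (simpl; field; lra).
    lra.
Qed.

Lemma geometric_uniform_limit : exists F, forall k x, Rabs (e k x - F x) <= C / 2 ^ k.
Proof.
  assert (Hcc : forall x, Cauchy_crit (fun k => e k x)).
  { intros x eps Heps. destruct (eventually_div_pow2_lt (2 * C) eps Heps) as [K HK].
    exists K. intros a b Ha Hb. unfold R_dist.
    pose proof (geometric_tail_le K a x Ha). pose proof (geometric_tail_le K b x Hb).
    specialize (HK K (le_n K)).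
    pose proof (Rabs_triang (e a x - e K x) (e K x - e b x)).
    replace (e a x - e K x + (e K x - e b x)) with (e a x - e b x) in * by ring.
    rewrite (Rabs_minus_sym (e K x)) in *. unfold Rdiv in *. lra. }
  exists (fun x => proj1_sig (R_complete _ (Hcc x))). intros k x.
  destruct (R_complete _ (Hcc x)) as [l Hl]. simpl.
  rewrite Rabs_minus_sym. apply (Un_cv_dist_le _ _ _ _ k Hl).
  intros j Hj. apply geometric_tail_le; auto.
Qed.

End GeometricLimit.

Lemma Int_part_IZR z : Int_part (IZR z) = z.
Proof. symmetry. apply Int_part_spec. lra. Qed.

Lemma Int_part_double_div2 y : (Int_part (2 * y) / 2 = Int_part y)%Z.
Proof.
  set (m := Int_part (2 * y)). destruct (base_Int_part (2 * y)) as [H1 H2]. fold m in H1, H2.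
  apply Int_part_spec.
  destruct (Z_div2_cases m) as [Hm|Hm]; rewrite Hm in H1, H2;
    rewrite ?plus_IZR, mult_IZR in H1, H2; simpl in H1, H2; lra.
Qed.

Lemma Rabs_Int_part_sub_le a b : Rabs (IZR (Int_part a - Int_part b)) <= Rabs (a - b) + 1.
Proof.
  pose proof (base_Int_part a). pose proof (base_Int_part b). rewrite minus_IZR.
  unfold Rabs; repeat destruct Rcase_abs; lra.
Qed.

Lemma lipschitz_continuity F L :
  (forall x y, Rabs (F x - F y) <= L * Rabs (x - y)) -> continuity F.
Proof.
  intros HF x eps Heps. pose proof (Rabs_pos L). pose proof (Rle_abs L).
  exists (eps / (Rabs L + 1)). split; [apply Rdiv_lt_0_compat; lra|].
  intros y [_ Hy]. simpl in *. unfold R_dist in *.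
  pose proof (Rabs_pos (y - x)).
  eapply Rle_lt_trans; [apply HF|].
  apply Rle_lt_trans with ((Rabs L + 1) * Rabs (y - x)); [nra|].
  apply Rmult_lt_reg_l with (/ (Rabs L + 1)); [apply Rinv_0_lt_compat; lra|].
  rewrite <- Rmult_assoc, Rinv_l by lra. unfold Rdiv in Hy. lra.
Qed.

Definition dyadic_step (g : nat -> Z -> R) (k : nat) (x : R) : R :=
  g k (Int_part (2 ^ k * x)).

Lemma dyadic_step_IZR g k i : dyadic_step g k (IZR i / 2 ^ k) = g k i.
Proof.
  unfold dyadic_step. replace (2 ^ k * (IZR i / 2 ^ k)) with (IZR i)
    by (field; apply pow_nonzero; lra).
  rewrite Int_part_IZR. reflexivity.
Qed.

Lemma lipschitz_of_dyadic_step_approx (g : nat -> Z -> R) F C L :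
  (forall k, increments_le (g k) (L / 2 ^ k)) ->
  (forall k x, Rabs (dyadic_step g k x - F x) <= C / 2 ^ k) ->
  forall x y, Rabs (F x - F y) <= L * Rabs (x - y).
Proof.
  intros Hinc HF x y. apply Rle_of_le_plus_div_pow2 with (2 * C + L). intros k.
  pose proof (pow_lt 2 k ltac:(lra)) as Hp.
  pose proof (HF k x) as Ax. pose proof (HF k y) as Ay. unfold dyadic_step in Ax, Ay.
  set (a := Int_part (2 ^ k * x)) in Ax. set (b := Int_part (2 ^ k * y)) in Ay.
  assert (Hab : Rabs (g k a - g k b) <= L * Rabs (x - y) + L / 2 ^ k).
  { pose proof (increments_le_nonneg _ _ (Hinc k)) as HL.
    eapply Rle_trans; [apply (increments_le_Z _ _ (Hinc k))|].
    eapply Rle_trans; [apply Rmult_le_compat_l, Rabs_Int_part_sub_le; auto|].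
    rewrite <- Rmult_minus_distr_l, Rabs_mult, (Rabs_pos_eq (2 ^ k)) by lra.
    right; field; lra. }
  pose proof (Rabs_triang (F x - g k a) (g k a - F y)).
  pose proof (Rabs_triang (g k a - g k b) (g k b - F y)).
  replace (F x - g k a + (g k a - F y)) with (F x - F y) in * by ring.
  replace (g k a - g k b + (g k b - F y)) with (g k a - F y) in * by ring.
  rewrite Rabs_minus_sym in Ax.
  replace ((2 * C + L) / 2 ^ k) with (C / 2 ^ k + C / 2 ^ k + L / 2 ^ k) by (field; lra).
  lra.
Qed.

Lemma limit_function_exists n f0 : (1 <= n)%nat -> bounded_seq f0 ->
  exists F, is_limit_function n f0 F.
Proof.
  intros Hn [M HM]. set (f := fun k => iterate n k f0).
  assert (Hinc : forall k, increments_le (f k) (2 * M / 2 ^ k))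
    by (apply iterate_increments; auto).
  assert (Hsucc : forall k x, Rabs (dyadic_step f (S k) x - dyadic_step f k x)
                              <= 4 * M * INR n / 2 ^ S k).
  { intros k x. unfold dyadic_step.
    replace (2 ^ S k * x) with (2 * (2 ^ k * x)) by (simpl; ring).
    rewrite <- (Int_part_double_div2 (2 ^ k * x)).
    eapply Rle_trans; [apply (step_sub_parent n Hn), Hinc|].
    pose proof (pow_lt 2 k ltac:(lra)). simpl. right; field; lra. }
  destruct (geometric_uniform_limit _ _ Hsucc) as [F HF].
  exists F. split.
  - apply lipschitz_continuity with (2 * M).
    apply (lipschitz_of_dyadic_step_approx f F (4 * M * INR n)); auto.
  - intros eps Heps. destruct (eventually_div_pow2_lt (4 * M * INR n) eps Heps) as [K HK].
    exists K. intros k Hk i. specialize (HK k Hk). specialize (HF k (IZR i / 2 ^ k)).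
    rewrite dyadic_step_IZR in HF. unfold f in HF. lra.
Qed.

Theorem theorem1 : forall n : nat, (1 <= n)%nat -> convergent n.
Proof.
  intros n Hn. split.
  - intros f0 Hf0. apply limit_function_exists; auto.
  - exists (fun _ => 1), (fun _ => 1). split; [|split; [split|]].
    + exists 1. intros. rewrite Rabs_R1. lra.
    + apply continuity_const. intros x y. reflexivity.
    + intros eps Heps. exists O. intros k _ i.
      rewrite iterate_const by auto. rewrite Rminus_diag, Rabs_R0. lra.
    + exists 0. lra.
Qed.
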